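(* Let $\mathscr G=(\mathscr V,\mathscr E)$ be a finite connected graph with $N$ vertices and $M\ge0$ an integer. The unique stationary distribution $\pi_Y$ of the immediate exchange model on $\mathscr C_{N,M}$ is reversible and $$\pi_Y(\xi)=\frac{\mu(\xi)}{\sum_{\eta\in\mathscr C_{N,M}}\mu(\eta)}\quad\text{where}\quad \mu(\xi)=\prod_{z\in\mathscr V}(\xi(z)+1).$$
   Context: $\mathscr C_{N,M}$ is the set of maps $\xi:\mathscr V\to\mathbb N$ with $\sum_x\xi(x)=M$. The immediate exchange model is the discrete-time Markov chain on $\mathscr C_{N,M}$: at each step an edge $(x,y)\in\mathscr E$ is chosen uniformly at random, independent $U_1$ uniform on $\{0,\dots,Y_t(x)\}$ and $U_2$ uniform on $\{0,\dots,Y_t(y)\}$ are drawn, and $Y_{t+1}(x)=Y_t(x)-U_1+U_2$, $Y_{t+1}(y)=Y_t(y)-U_2+U_1$, $Y_{t+1}(z)=Y_t(z)$ for $z\notin\{x,y\}$. This chain has a unique stationary distribution, denoted $\pi_Y$. *)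

From HB Require Import structures.
From mathcomp Require Import all_boot all_order all_algebra.
Set Implicit Arguments. Unset Strict Implicit. Unset Printing Implicit Defensive.
Import Order.TTheory GRing.Theory Num.Theory.

(* The state space C_{N,M}: maps xi : V -> nat with sum M
   (encoded with values in 'I_(M.+1), which loses nothing since each
   value is at most M). *)
Definition conf (V : finType) (M : nat) :=
  {f : {ffun V -> 'I_M.+1} | \sum_(x : V) (f x : nat) == M}.

Definition cval (V : finType) (M : nat) (xi : conf V M) (x : V) : nat :=
  val xi x.

Definition edges (V : finType) (e : rel V) : {set V * V} :=
  [set p : V * V | e p.1 p.2].

(* Y_{t+1} given Y_t = xi, chosen edge (x,y) and U1 = u1, U2 = u2. *)
Definition upd (V : finType) (xi : V -> nat) (x y : V) (u1 u2 : nat) : V -> nat :=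
  fun z => if z == x then xi x - u1 + u2
           else if z == y then xi y - u2 + u1 else xi z.

Local Open Scope ring_scope.

(* One-step transition probability P(xi, xi') of the immediate exchange model:
   edge uniform on the edge set, U1 uniform on {0..xi x}, U2 uniform on
   {0..xi y}, independent. *)
Definition ie_kernel (R : realFieldType) (V : finType) (e : rel V) (M : nat)
  (xi xi' : conf V M) : R :=
  \sum_(p in edges e)
     (#|edges e|%:R)^-1 *
     \sum_(u1 < (cval xi p.1).+1) \sum_(u2 < (cval xi p.2).+1)
        ((((cval xi p.1).+1 * (cval xi p.2).+1)%N)%:R)^-1 *
        (if [forall z, cval xi' z == upd (cval xi) p.1 p.2 u1 u2 z]
         then 1 else 0).

Definition is_distribution (R : realFieldType) (T : finType) (p : T -> R) :=
  (forall t, 0 <= p t) /\ \sum_t p t = 1.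

Definition is_stationary (R : realFieldType) (T : finType) (P : T -> T -> R)
  (p : T -> R) :=
  is_distribution p /\ forall t', \sum_t p t * P t t' = p t'.

Definition is_reversible (R : realFieldType) (T : finType) (P : T -> T -> R)
  (p : T -> R) :=
  forall t t', p t * P t t' = p t' * P t' t.

Definition mu (R : realFieldType) (V : finType) (M : nat) (xi : conf V M) : R :=
  \prod_(z : V) ((cval xi z).+1)%:R.

From HB Require Import structures.
From mathcomp Require Import all_boot all_order all_algebra.
From mathcomp Require Import zify ring.
Set Implicit Arguments. Unset Strict Implicit. Unset Printing Implicit Defensive.
Import Order.TTheory GRing.Theory Num.Theory.

(* Detailed balance holds edge by edge.  An exchange (u1, u2) across the edge
   (x, y) leading from xi to xi' is undone by the exchange (u2, u1) leading
   back, so both directions are realised by the same number of exchanges.  The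
   transition probability divides this number by (xi(x) + 1)(xi(y) + 1), which
   are exactly the factors of mu(xi) at x and y, while the other factors of mu
   agree on xi and xi'.  Hence pi_Y is reversible, and so stationary.
   The chain is irreducible, since every configuration can carry all its mass,
   one vertex at a time and along paths of the graph, to a fixed vertex.  If p
   is stationary, reversibility makes p / pi_Y harmonic for the kernel, so it
   is constant by the maximum principle, and normalisation forces it to be 1. *)

Section MassTransfer.
Variable V : finType.
Implicit Types (f g : V -> nat) (x y z : V).

Definition transfer f x y (a : nat) : V -> nat :=
  fun z => f z - (if z == x then a else 0) + (if z == y then a else 0).

Lemma sumn_if_eq x (a : nat) : \sum_z (if z == x then a else 0) = a.
Proof. by rewrite -big_mkcond big_pred1_eq. Qed.

Lemma sum_transfer f x y a : a <= f x -> \sum_z transfer f x y a z = \sum_z f z.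
Proof.
move=> le_a; apply/(@addIn a).
rewrite -[X in _ + X = _](sumn_if_eq x a) -[X in _ = _ + X](sumn_if_eq y a).
rewrite -!big_split /=; apply: eq_bigr => z _; rewrite /transfer.
by case: (z =P x) => [->|_]; case: (_ == y); lia.
Qed.

Lemma transfer_id f x a : a <= f x -> transfer f x x a =1 f.
Proof. by move=> le_a z; rewrite /transfer; case: eqP => [->|]; lia. Qed.

Lemma transfer_trans f x w y a :
  transfer (transfer f x w a) w y a =1 transfer f x y a.
Proof.
by move=> z; rewrite /transfer; case: (z == x); case: (z == w); case: (z == y); lia.
Qed.

Lemma upd0_transfer f x y a : x != y -> upd f x y a 0 =1 transfer f x y a.
Proof.
move=> /negbTE xy z; rewrite /upd /transfer.
by have [->|_] := eqVneq z x; rewrite ?xy; [|case: eqP => [->|]]; lia.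
Qed.

Lemma upd_transfer f x y u1 u2 : x != y -> u2 <= f y ->
  upd f x y u1 u2 =1 transfer (transfer f x y u1) y x u2.
Proof.
move=> /negbTE xy le_u2 z; rewrite /upd /transfer.
by have [->|_] := eqVneq z x; rewrite ?xy; [|case: eqP => [->|]]; lia.
Qed.

Lemma sum_upd f x y u1 u2 : x != y -> u1 <= f x -> u2 <= f y ->
  \sum_z upd f x y u1 u2 z = \sum_z f z.
Proof.
move=> xy le_u1 le_u2; have /negbTE yx : y != x by rewrite eq_sym.
rewrite (eq_bigr _ (fun z _ => upd_transfer u1 xy le_u2 z)) !sum_transfer //.
by rewrite /transfer yx eqxx; lia.
Qed.

Definition exchange f g x y (u1 u2 : nat) : bool :=
  [&& u1 <= f x, u2 <= f y & [forall z, g z == upd f x y u1 u2 z]].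

Lemma exchange_sym f g x y u1 u2 : x != y ->
  exchange f g x y u1 u2 = exchange g f x y u2 u1.
Proof.
move=> xy; suff undo f' g' v1 v2 : exchange f' g' x y v1 v2 -> exchange g' f' x y v2 v1.
  by apply/idP/idP; apply: undo.
case/and3P=> le_v1 le_v2 /forallP g'E.
have {}g'E z : g' z = upd f' x y v1 v2 z by apply/eqP.
have g'x : g' x = f' x - v1 + v2 by rewrite g'E /upd eqxx.
have g'y : g' y = f' y - v2 + v1 by rewrite g'E /upd eq_sym (negbTE xy) eqxx.
apply/and3P; split; [lia | lia | apply/forallP => z; apply/eqP].
rewrite /upd; have [->|zx] := eqVneq z x; first lia.
have [->|zy] := eqVneq z y; first lia.
by rewrite g'E /upd (negbTE zx) (negbTE zy).
Qed.

Lemma exchange_outside f g x y u1 u2 z : exchange f g x y u1 u2 ->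
  z != x -> z != y -> g z = f z.
Proof.
case/and3P=> _ _ /forallP/(_ z)/eqP -> /negbTE zx /negbTE zy.
by rewrite /upd zx zy.
Qed.

End MassTransfer.

Section Configurations.
Variables (V : finType) (M : nat).
Implicit Types xi : conf V M.

Lemma cval_sum xi : \sum_z cval xi z = M.
Proof. exact: eqP (valP xi). Qed.

Lemma cval_le xi z : cval xi z <= M.
Proof. by rewrite -ltnS ltn_ord. Qed.

Lemma conf_ext xi xi' : cval xi =1 cval xi' -> xi = xi'.
Proof. by move=> eq_xi; apply/val_inj/ffunP => z; apply/val_inj/eq_xi. Qed.

Lemma exists_conf (f : V -> nat) : \sum_z f z = M -> exists xi, cval xi =1 f.
Proof.
move=> sum_f; have le_f z : f z < M.+1 by rewrite ltnS -sum_f (bigD1 z) //= leq_addr.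
pose g : {ffun V -> 'I_M.+1} := [ffun z => inord (f z)].
have sum_ok : \sum_z (g z : nat) == M.
  by apply/eqP; rewrite -[RHS]sum_f; apply: eq_bigr => z _; rewrite ffunE inordK.
by exists (exist _ g sum_ok : conf V M) => z; rewrite /cval /= ffunE inordK.
Qed.

Lemma concentrated_conf_eq (v0 : V) xi xi' :
  (forall z, z != v0 -> cval xi z = 0) -> (forall z, z != v0 -> cval xi' z = 0) ->
  xi = xi'.
Proof.
suff atv0 xi'' : (forall z, z != v0 -> cval xi'' z = 0) -> cval xi'' v0 = M.
  move=> conc conc'; apply: conf_ext => z.
  by have [->|zv0] := eqVneq z v0; rewrite ?atv0 ?conc ?conc'.
by move=> conc; rewrite -[RHS](cval_sum xi'') (bigD1 v0) //= big1 ?addn0.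
Qed.

(* u1 and u2 range over [0, M] rather than over [0, xi x] and [0, xi y], so
   that the count can be compared with the one from xi' back to xi. *)
Definition exchanges xi xi' x y : nat :=
  \sum_(u1 < M.+1) \sum_(u2 < M.+1) exchange (cval xi) (cval xi') x y u1 u2.

Lemma exchanges_sym xi xi' x y : x != y -> exchanges xi xi' x y = exchanges xi' xi x y.
Proof.
move=> xy; rewrite /exchanges exchange_big /=.
by apply: eq_bigr => u1 _; apply: eq_bigr => u2 _; rewrite exchange_sym.
Qed.

Lemma exchanges_eq0 xi xi' x y z : z != x -> z != y -> cval xi z != cval xi' z ->
  exchanges xi xi' x y = 0.
Proof.
move=> zx zy neq_z; rewrite /exchanges big1 // => u1 _; rewrite big1 // => u2 _.
by apply/eqP; rewrite eqb0; apply: contra neq_z => /exchange_outside/(_ zx zy) ->.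
Qed.

Lemma exchanges_gt0 xi xi' x y u1 u2 :
  exchange (cval xi) (cval xi') x y u1 u2 -> 0 < exchanges xi xi' x y.
Proof.
move=> ex; case/and3P: (ex) => le_u1 le_u2 _.
have u1_lt : u1 < M.+1 by rewrite ltnS (leq_trans le_u1) ?cval_le.
have u2_lt : u2 < M.+1 by rewrite ltnS (leq_trans le_u2) ?cval_le.
rewrite /exchanges (bigD1 (Ordinal u1_lt)) //= (bigD1 (Ordinal u2_lt)) //= ex.
by rewrite -addnA.
Qed.

End Configurations.

Lemma edges_gt0 (V : finType) (e : rel V) :
  1 < #|V| -> (forall x y, connect e x y) -> 0 < #|edges e|.
Proof.
case/card_gt1P=> x [y [_ _ xy]] /(_ x y)/connectP[[|w p] /=].
  by move=> _ yx; rewrite yx eqxx in xy.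
by case/andP=> exw _ _; apply/card_gt0P; exists (x, w); rewrite inE.
Qed.

Lemma connect_preserves (T : finType) (r : rel T) (A : T -> Prop) :
  (forall a b, r a b -> A a -> A b) -> forall a b, connect r a b -> A a -> A b.
Proof.
move=> rA a _ /connectP[p r_p ->]; elim: p a r_p => //= b p IHp a /andP[rab r_p].
by move/(rA _ _ rab); apply: IHp.
Qed.

Local Open Scope ring_scope.

Lemma sumr_gt0 (R : numDomainType) (T : finType) (w : T -> R) (t0 : T) :
  (forall t, 0 < w t) -> 0 < \sum_t w t.
Proof.
move=> w_gt0; rewrite (bigD1 t0) //= ltr_pwDl ?w_gt0 ?sumr_ge0 // => t _.
exact: ltW.
Qed.

Definition irreducible (R : numDomainType) (T : finType) (P : T -> T -> R) :=
  forall a b, connect [rel t t' | 0 < P t t'] a b.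

Section FiniteMarkovChain.
Variables (R : realFieldType) (T : finType) (P : T -> T -> R).
Hypothesis P_ge0 : forall t t', 0 <= P t t'.
Hypothesis P_row1 : forall t, \sum_t' P t t' = 1.

Lemma normalized_distribution (w : T -> R) (t0 : T) :
  (forall t, 0 < w t) -> is_distribution (fun t => w t / \sum_t' w t').
Proof.
move=> w_gt0; split=> [t|]; first by rewrite divr_ge0 ?ltW ?sumr_gt0.
by rewrite -mulr_suml mulfV ?gt_eqF ?(sumr_gt0 t0).
Qed.

Lemma reversible_stationary (pi : T -> R) :
  is_reversible P pi -> forall t', \sum_t pi t * P t t' = pi t'.
Proof.
by move=> pi_rev t'; under eq_bigr do rewrite pi_rev; rewrite -mulr_sumr P_row1 mulr1.
Qed.

Lemma stationary_ratio_harmonic (pi p : T -> R) :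
  (forall t, 0 < pi t) -> is_reversible P pi ->
  (forall t', \sum_t p t * P t t' = p t') ->
  forall t, p t / pi t = \sum_t' P t t' * (p t' / pi t').
Proof.
move=> pi_gt0 pi_rev p_stat t; rewrite -[in LHS]p_stat mulr_suml.
have pi_neq0 t' : pi t' != 0 := lt0r_neq0 (pi_gt0 t').
apply: eq_bigr => t' _.
have -> : P t' t = pi t * P t t' / pi t' by rewrite pi_rev mulrAC mulfV // mul1r.
by field; rewrite !pi_neq0.
Qed.

Lemma harmonic_const (h : T -> R) : irreducible P ->
  (forall t, h t = \sum_t' P t t' * h t') -> forall a b, h a = h b.
Proof.
move=> P_irr h_harm a b.
have [t0 _ h_max] := @arg_maxP _ R _ a xpredT h isT.
suff h_t0 t : h t = h t0 by rewrite !h_t0.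
apply: (@connect_preserves _ _ (fun x => h x = h t0) _ t0 t (P_irr t0 t) erefl).
(* At a maximiser x, h x is an average of values <= h x, so it equals each of
   them that carries positive weight. *)
move=> x y /= Pxy hx.
have terms_ge0 t' : 0 <= P x t' * (h x - h t').
  by rewrite mulr_ge0 ?P_ge0 // subr_ge0 hx; exact: h_max.
have : \sum_t' P x t' * (h x - h t') = 0.
  by under eq_bigr do rewrite mulrBr; rewrite sumrB -mulr_suml P_row1 mul1r -h_harm subrr.
move/psumr_eq0P => /(_ (fun t' _ => terms_ge0 t') y isT) /eqP.
by rewrite mulf_eq0 gt_eqF //= subr_eq0 -hx => /eqP.
Qed.

Lemma reversible_stationary_unique (pi p : T -> R) : irreducible P ->
  (forall t, 0 < pi t) -> is_distribution pi -> is_reversible P pi ->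
  is_stationary P p -> p =1 pi.
Proof.
move=> P_irr pi_gt0 [_ pi_sum1] pi_rev [[_ p_sum1] p_stat] t.
have ratio_const := harmonic_const P_irr (stationary_ratio_harmonic pi_gt0 pi_rev p_stat).
have pE u : p u = p u / pi u * pi u by rewrite divfK ?lt0r_neq0.
have ratio1 : p t / pi t = 1.
  rewrite -[RHS]p_sum1 -[LHS]mulr1 -pi_sum1 mulr_sumr; apply: eq_bigr => u _.
  by rewrite [RHS]pE (ratio_const u t).
by rewrite pE ratio1 mul1r.
Qed.

End FiniteMarkovChain.

Section ImmediateExchange.
Variables (R : realFieldType) (V : finType) (e : rel V) (M : nat).
Hypothesis e_irr : irreflexive e.
Local Notation P := (@ie_kernel R V e M).
Implicit Types xi : conf V M.

Lemma edge_neq x y : e x y -> x != y.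
Proof. by apply: contraTneq => ->; rewrite e_irr. Qed.

Lemma edges_neq p : p \in edges e -> p.1 != p.2.
Proof. by rewrite inE => /edge_neq. Qed.

Lemma sum_exchange_indicator (c : R) xi xi' x y :
  \sum_(u1 < (cval xi x).+1) \sum_(u2 < (cval xi y).+1)
     c * (if [forall z, cval xi' z == upd (cval xi) x y u1 u2 z] then 1 else 0)
  = c * (exchanges xi xi' x y)%:R.
Proof.
rewrite /exchanges natr_sum mulr_sumr.
rewrite (big_ord_widen M.+1 (fun u1 : nat => \sum_(u2 < (cval xi y).+1)
  c * (if [forall z, cval xi' z == upd (cval xi) x y u1 u2 z] then 1 else 0)));
  last by rewrite ltnS cval_le.
rewrite big_mkcond; apply: eq_bigr => u1 _; rewrite natr_sum mulr_sumr.
rewrite (big_ord_widen M.+1 (fun u2 : nat =>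
  c * (if [forall z, cval xi' z == upd (cval xi) x y u1 u2 z] then 1 else 0)));
  last by rewrite ltnS cval_le.
rewrite big_mkcond ltnS /exchange; case: (u1 <= cval xi x)%N => /=.
  by apply: eq_bigr => u2 _; rewrite ltnS; case: (u2 <= _)%N; case: [forall _, _];
    rewrite /= ?mulr0 ?mulr1.
by rewrite big1 // => u2 _; rewrite mulr0.
Qed.

Lemma ie_kernelE xi xi' : P xi xi' =
  \sum_(p in edges e) (#|edges e|%:R)^-1 *
    (((cval xi p.1).+1 * (cval xi p.2).+1)%N%:R)^-1 * (exchanges xi xi' p.1 p.2)%:R.
Proof. by apply: eq_bigr => p _; rewrite sum_exchange_indicator mulrA. Qed.

Lemma ie_kernel_ge0 xi xi' : 0 <= P xi xi'.
Proof.
by rewrite ie_kernelE sumr_ge0 // => p _; rewrite !mulr_ge0 ?invr_ge0 ?ler0n.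
Qed.

Lemma ie_kernel_gt0 xi xi' x y u1 u2 :
  e x y -> exchange (cval xi) (cval xi') x y u1 u2 -> 0 < P xi xi'.
Proof.
move=> exy ex; have E_gt0 : (0 < #|edges e|)%N.
  by apply/card_gt0P; exists (x, y); rewrite inE.
rewrite ie_kernelE (bigD1 (x, y)) ?inE //=; apply: ltr_pwDl.
  by rewrite !mulr_gt0 ?invr_gt0 ?ltr0n ?muln_gt0 ?(exchanges_gt0 ex).
by rewrite sumr_ge0 // => p _; rewrite !mulr_ge0 ?invr_ge0 ?ler0n.
Qed.

Lemma sum_conf_indicator (f : V -> nat) : (\sum_z f z)%N = M ->
  \sum_(xi : conf V M) (if [forall z, cval xi z == f z] then 1 else 0 : R) = 1.
Proof.
move=> sum_f; have [xi0 xi0E] := exists_conf sum_f.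
rewrite (bigD1 xi0) //= ifT; last by apply/forallP => z; rewrite xi0E.
rewrite big1 ?addr0 // => xi ne; case: ifP => // /forallP xiE.
by exfalso; move/eqP: ne; apply; apply: conf_ext => z; rewrite xi0E; apply/eqP.
Qed.

Lemma ie_kernel_row1 xi : (0 < #|edges e|)%N -> \sum_xi' P xi xi' = 1.
Proof.
move=> E_gt0; rewrite /ie_kernel exchange_big /=.
transitivity (\sum_(p in edges e) (#|edges e|%:R)^-1 : R); last first.
  by rewrite sumr_const -[LHS]mulr_natr mulVf // pnatr_eq0 -lt0n.
apply: eq_bigr => p /edges_neq xy; rewrite -mulr_sumr -[RHS]mulr1; congr (_ * _).
rewrite exchange_big /=; under eq_bigr do rewrite exchange_big /=.
under eq_bigr => u1 _ do under eq_bigr => u2 _ do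
  rewrite -mulr_sumr (sum_conf_indicator (etrans (sum_upd xy (ltnSE (ltn_ord u1))
    (ltnSE (ltn_ord u2))) (cval_sum xi))) mulr1.
rewrite !sumr_const !card_ord -mulrnA -[LHS]mulr_natr mulnC mulVf //.
by rewrite pnatr_eq0 muln_eq0.
Qed.

Lemma mu_gt0 xi : 0 < mu R xi.
Proof. by apply: prodr_gt0 => z _; rewrite ltr0Sn. Qed.

Definition mu_off xi x y : R := \prod_(z | (z != x) && (z != y)) (cval xi z).+1%:R.

Lemma mu_split xi x y : x != y ->
  mu R xi = ((cval xi x).+1 * (cval xi y).+1)%N%:R * mu_off xi x y.
Proof.
move=> xy; rewrite /mu (bigD1 x) //= (bigD1 y) 1?eq_sym //= natrM mulrA.
by congr (_ * _); apply: eq_bigl => z; rewrite andbC.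
Qed.

Lemma mu_off_exchanges xi xi' x y : x != y ->
  mu_off xi x y * (exchanges xi xi' x y)%:R = mu_off xi' x y * (exchanges xi' xi x y)%:R.
Proof.
move=> xy; rewrite (exchanges_sym _ _ xy).
have [-> | ex_neq0] := eqVneq (exchanges xi' xi x y) 0%N; first by rewrite !mulr0.
congr (_ * _); apply: eq_bigr => z /andP[zx zy].
have [->//|neq_z] := eqVneq (cval xi z) (cval xi' z).
by rewrite -(exchanges_sym _ _ xy) (exchanges_eq0 zx zy neq_z) in ex_neq0.
Qed.

Lemma mu_detailed_balance xi xi' : mu R xi * P xi xi' = mu R xi' * P xi' xi.
Proof.
rewrite !ie_kernelE !mulr_sumr; apply: eq_bigr => p /edges_neq xy.
have cancel (c d m w : R) : d != 0 -> d * m * (c * d^-1 * w) = c * (m * w).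
  by move=> d_neq0; field.
rewrite (mu_split xi xy) (mu_split xi' xy) !cancel ?pnatr_eq0 ?muln_eq0 //.
by rewrite mu_off_exchanges.
Qed.

Lemma ie_kernel_gt0_sym xi xi' : 0 < P xi xi' -> 0 < P xi' xi.
Proof.
move=> P_gt0; rewrite -(pmulr_rgt0 _ (mu_gt0 xi')) -mu_detailed_balance.
by rewrite mulr_gt0 ?mu_gt0.
Qed.

Section Irreducibility.
Hypothesis e_conn : forall x y : V, connect e x y.
Local Notation ie_step := [rel xi xi' : conf V M | 0 < P xi xi'].

Lemma connect_transfer_edge xi xi' x y a : e x y -> (a <= cval xi x)%N ->
  cval xi' =1 transfer (cval xi) x y a -> connect ie_step xi xi'.
Proof.
move=> exy le_a xi'E; apply/connect1/(@ie_kernel_gt0 _ _ x y a 0) => //.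
apply/and3P; split=> //; apply/forallP => z.
by rewrite xi'E upd0_transfer ?edge_neq.
Qed.

Lemma connect_transfer_path p x xi xi' a : path e x p -> (a <= cval xi x)%N ->
  cval xi' =1 transfer (cval xi) x (last x p) a -> connect ie_step xi xi'.
Proof.
elim: p x xi => [|w p IHp] x xi /=.
  move=> _ le_a xi'E; suff -> : xi' = xi by exact: connect0.
  by apply: conf_ext => z; rewrite xi'E transfer_id.
case/andP=> exw w_p le_a xi'E.
have [mid midE] := exists_conf (etrans (sum_transfer w le_a) (cval_sum xi)).
apply: connect_trans (connect_transfer_edge exw le_a midE) _.
apply: (IHp w mid) => //; first by rewrite midE /transfer eqxx leq_addl.
by move=> z; rewrite xi'E -(transfer_trans _ x w) /transfer midE.
Qed.

Lemma connect_transfer xi xi' x y a : (a <= cval xi x)%N ->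
  cval xi' =1 transfer (cval xi) x y a -> connect ie_step xi xi'.
Proof.
move=> le_a xi'E; have /connectP[p x_p y_last] := e_conn x y.
by apply: (connect_transfer_path x_p le_a); rewrite -y_last.
Qed.

Lemma connect_concentrated v0 xi xi0 :
  (forall z, z != v0 -> cval xi0 z = 0%N) -> connect ie_step xi xi0.
Proof.
move=> conc0; move: {2}(M - cval xi v0)%N (leqnn (M - cval xi v0)) => n.
elim/ltn_ind: n xi => n IHn xi le_n.
have [x /andP[xv0 x_gt0]|none] := pickP [pred x | (x != v0) && (0 < cval xi x)%N].
  have [mid midE] :=
    exists_conf (etrans (sum_transfer v0 (leqnn (cval xi x))) (cval_sum xi)).
  apply: connect_trans (connect_transfer (leqnn _) midE) (IHn _ _ mid (leqnn _)).
  have := cval_le mid v0; rewrite midE /transfer eqxx eq_sym (negbTE xv0); lia.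
have conc z : z != v0 -> cval xi z = 0%N.
  by move=> zv0; move: (none z); rewrite /= zv0 lt0n => /negbFE/eqP.
by rewrite (concentrated_conf_eq conc conc0) connect0.
Qed.

Lemma ie_irreducible : (0 < #|V|)%N -> irreducible P.
Proof.
move=> /card_gt0P[v0 _] a b.
have [xi0 xi0E] := exists_conf (sumn_if_eq v0 M).
have conc0 z : z != v0 -> cval xi0 z = 0%N by move=> /negbTE zv0; rewrite xi0E zv0.
have step_sym : symmetric ie_step.
  by move=> xi xi'; apply/idP/idP; apply: ie_kernel_gt0_sym.
apply: connect_trans (connect_concentrated a conc0) _.
by rewrite (sym_connect_sym step_sym) (connect_concentrated b conc0).
Qed.

End Irreducibility.
End ImmediateExchange.

Theorem lemma4 (R : realFieldType) (V : finType) (e : rel V) (M : nat)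
  (e_sym : symmetric e) (e_irr : irreflexive e)
  (e_conn : forall x y : V, connect e x y)
  (hN : (1 < #|V|)%N) :
  let piY := fun xi : conf V M =>
               mu R xi / \sum_(eta : conf V M) mu R eta in
  is_stationary (@ie_kernel R V e M) piY /\
  is_reversible (@ie_kernel R V e M) piY /\
  (forall p : conf V M -> R, is_stationary (@ie_kernel R V e M) p ->
     forall xi, p xi = piY xi).
Proof.
move=> piY.
have V_gt0 : (0 < #|V|)%N by exact: ltnW.
have /card_gt0P[v0 _] := V_gt0.
have [xi0 _] := exists_conf (sumn_if_eq v0 M).
have P_row1 (xi : conf V M) := ie_kernel_row1 R e_irr xi (edges_gt0 hN e_conn).
have pi_gt0 xi : 0 < piY xi by rewrite divr_gt0 ?mu_gt0 ?(sumr_gt0 xi0 (@mu_gt0 _ _ _)).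
have pi_dist : is_distribution piY := normalized_distribution xi0 (@mu_gt0 _ _ _).
have pi_rev : is_reversible (@ie_kernel R V e M) piY.
  by move=> xi xi'; rewrite /piY mulrAC mu_detailed_balance // mulrAC.
split; first by split=> // t'; apply: reversible_stationary.
split=> // p p_stat xi.
exact: (reversible_stationary_unique (@ie_kernel_ge0 R V e M) P_row1
  (@ie_irreducible R V e M e_irr e_conn V_gt0) pi_gt0 pi_dist pi_rev p_stat xi).
Qed.
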